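(* Let $\epsilon_1>0$ and let $u$ be a utility function on contexts of sensitivity $\Delta u\le1$ (context population size $|D_C|$ or overlap $|D_C\cap D_{C_V}|$ with a fixed starting context $C_V$, set to $-\infty$ on non-matching contexts). Consider the Uniform Sampling algorithm: starting with an empty multiset $C_M$, repeatedly draw a context $C$ by setting each of its $t$ bits independently to $1$ with probability $1/2$ and to $0$ otherwise, adding $C$ to $C_M$ whenever $f_M(D_C,V)=\mathrm{true}$, as long as $|C_M|\le n$; then output $\mathrm{Exp}^{\epsilon_1}_u(D,C_M)$. Then this algorithm satisfies $(2\epsilon_1,\ COE_M(\cdot,V))$-Output Constrained Differential Privacy.
   Context: Dataset $D$ over categorical attributes $A_1,\dots,A_m$ (domain sizes $|A_i|$, all possible values) and metric attribute $M$; $t=\sum_i|A_i|$. A context is a binary vector of length $t$, $c_{ij}=1$ meaning the $j$-th value of $A_i$ is selected; $D_C$ is the set of tuples of $D$ whose value in every $A_i$ is selected by $C$. $f_M(D_C,V)$ is a deterministic test of whether record $V$ is an outlier in $D_C$ w.r.t. $M$. $COE_M(D,V)$ is the set of contexts $C$ with $V\in D_C$ and $f_M(D_C,V)=\mathrm{true}$. $n$ is the desired number of samples. Sensitivity: $\Delta u=\max|u(D_1,r)-u(D_2,r)|$ over neighboring datasets (differing by adding/removing one record) and outputs $r$. $\mathrm{Exp}^{\epsilon}_u(D,\mathcal R)$ outputs $r\in\mathcal R$ with probability $\exp(\epsilon u(D,r)/(2\Delta u))/\sum_{r'\in\mathcal R}\exp(\epsilon u(D,r')/(2\Delta u))$.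 $D_1,D_2$ are $f$-neighbors if they differ by adding/removing one record and $f(D_1)=f(D_2)\ne\emptyset$; $\mathcal M$ satisfies $(\epsilon,f)$-Output Constrained Differential Privacy if $\Pr[\mathcal M(D_1)\in S]\le e^\epsilon\Pr[\mathcal M(D_2)\in S]$ for all $f$-neighbors $D_1,D_2$ and all output sets $S$. *)

From HB Require Import structures.
From mathcomp Require Import all_boot all_order all_algebra.
From mathcomp Require Import all_classical all_reals all_analysis.
Set Implicit Arguments. Unset Strict Implicit. Unset Printing Implicit Defensive.
Import Order.TTheory GRing.Theory Num.Theory.
Local Open Scope ring_scope.

Section Defs.
Variables (m : nat) (k : 'I_m -> nat) (Mt : eqType).

(* (attribute index i, value index j) : the bit c_ij of a context *)
Definition pair_t := {i : 'I_m & 'I_(k i)}.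
Definition tbits : nat := #|{: pair_t}|.
(* A context: binary vector of length t, represented as the set of bits set to 1 *)
Definition context := {set pair_t}.
(* A record: a value for every categorical attribute A_i, and a metric value *)
Definition record := ({dffun forall i : 'I_m, 'I_(k i)} * Mt)%type.
Definition dataset := seq record.

Definition selects (C : context) (x : record) : bool :=
  [forall i : 'I_m, Tagged (fun i => 'I_(k i)) (x.1 i) \in C].
Definition restrictC (D : dataset) (C : context) : dataset :=
  [seq x <- D | selects C x].

Definition COE (f : dataset -> record -> bool) (D : dataset) (V : record)
  : {set context} :=
  [set C | (V \in restrictC D C) && f (restrictC D C) V].

Definition neighbors (D1 D2 : dataset) : Prop :=
  exists x : record, perm_eq D2 (x :: D1) \/ perm_eq D1 (x :: D2).

Definition COE_neighbors f V (D1 D2 : dataset) : Prop :=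
  neighbors D1 D2 /\ COE f D1 V = COE f D2 V /\ COE f D1 V != finset.set0.

Variable R : realType.

(* Exponential mechanism over a multiset s of contexts (each occurrence is a
   candidate): probability that it outputs r *)
Definition exp_mech (eps du : R) (u : dataset -> context -> R) (D : dataset)
  (s : seq context) (r : context) : R :=
  (\sum_(c <- s | c == r) expR (eps * u D c / (2 * du))) /
  (\sum_(c <- s) expR (eps * u D c / (2 * du))).

(* probability of one drawn context: each of the t bits is 1 w.p. 1/2 *)
Definition draw_prob : R := (2^-1) ^+ tbits.

Definition accepted f (D : dataset) (V : record) (h : seq context) : seq context :=
  [seq C <- h | f (restrictC D C) V && (V \in restrictC D C)].

(* the loop "while |C_M| <= n" stops exactly after the L-th draw *)
Definition stops_at f D V n L (h : L.-tuple context) : bool :=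
  (size (accepted f D V h) == n.+1) &&
  (size (accepted f D V (take L.-1 h)) == n).

Definition unif_sampling_prob (eps1 du : R) (u : dataset -> context -> R)
  f V (n : nat) (D : dataset) (r : context) : \bar R :=
  (\sum_(L <oo)
     ((\sum_(h : L.-tuple context | stops_at f D V n h)
          draw_prob ^+ L * exp_mech eps1 du u D (accepted f D V h) r)%:E))%E.

Definition OCDP (eps : R) f V (M : dataset -> context -> \bar R) : Prop :=
  forall D1 D2 : dataset, COE_neighbors f V D1 D2 ->
  forall S : {set context},
    (\sum_(r in S) M D1 r <= (expR eps)%:E * \sum_(r in S) M D2 r)%E.

End Defs.

From HB Require Import structures.
From mathcomp Require Import all_boot all_order all_algebra.
From mathcomp Require Import all_classical all_reals all_analysis.
From mathcomp Require Import ring lra.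
Import Order.TTheory GRing.Theory Num.Theory.
Local Open Scope ring_scope.

(* The sampling loop sees the dataset only through the set COE_M(D,V) of
   contexts it accepts, and f-neighbours share that set: both runs stop on the
   same draw histories with the same multiset C_M.  Only the final exponential
   mechanism depends on D, and on every context of C_M the record V lies in
   both restrictions, so utilities differ by at most du and each output
   probability moves by a factor at most e^eps1 <= e^(2 eps1). *)

Lemma ler_sum_ratio (R : realFieldType) (I : eqType) (s : seq I) (P : pred I)
    (w1 w2 : I -> R) (a : R) :
  (forall c, 0 <= w1 c) -> (forall c, 0 <= w2 c) ->
  {in s, forall c, w1 c <= a * w2 c} -> {in s, forall c, w2 c <= a * w1 c} ->
  (\sum_(c <- s | P c) w1 c) / (\sum_(c <- s) w1 c) <=
  a * a * ((\sum_(c <- s | P c) w2 c) / (\sum_(c <- s) w2 c)).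
Proof.
move=> w1_ge0 w2_ge0 w12 w21.
set N1 := \sum_(c <- s | P c) w1 c; set S1 := \sum_(c <- s) w1 c.
set N2 := \sum_(c <- s | P c) w2 c; set S2 := \sum_(c <- s) w2 c.
have sum_le (w w' : I -> R) (Q : pred I) :
    {in s, forall c, w c <= a * w' c} ->
    \sum_(c <- s | Q c) w c <= a * \sum_(c <- s | Q c) w' c.
  move=> ww'; rewrite mulr_sumr big_seq_cond [leRHS]big_seq_cond.
  by apply: ler_sum => c /andP[/ww'].
have N1_le : N1 <= a * N2 by exact: sum_le.
have S1_le : S1 <= a * S2 by exact: sum_le.
have S2_le : S2 <= a * S1 by exact: sum_le.
have N1_ge0 : 0 <= N1 by rewrite sumr_ge0.
have [S1_0 | S1_neq0] := eqVneq S1 0.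
  rewrite S1_0 invr0 mulr0 mulr_ge0 ?divr_ge0 ?sumr_ge0 //.
  by rewrite -expr2 sqr_ge0.
have S1_gt0 : 0 < S1 by rewrite lt_def S1_neq0 sumr_ge0.
have S2_gt0 : 0 < S2.
  rewrite lt_def sumr_ge0 // andbT; apply: contraTneq S1_le => ->.
  by rewrite mulr0 -ltNge.
have -> : a * a * (N2 / S2) = (a * N2) * (a * S1) / (S1 * S2).
  by field; rewrite !gt_eqF.
have -> : N1 / S1 = N1 * S2 / (S1 * S2) by field; rewrite !gt_eqF.
rewrite ler_pM2r ?invr_gt0 ?mulr_gt0 //.
by apply: ler_pM => //; exact: ltW.
Qed.

Lemma expR_shift_le (R : realType) (eps du x y : R) :
  0 < eps -> 0 < du -> x - y <= du ->
  expR (eps * x / (2 * du)) <= expR (eps / 2) * expR (eps * y / (2 * du)).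
Proof.
move=> eps_gt0 du_gt0 xy_le; rewrite -expRD ler_expR.
have -> : eps / 2 + eps * y / (2 * du) = eps * (du + y) / (2 * du).
  by field; rewrite gt_eqF.
by rewrite ler_pM2r ?invr_gt0 ?mulr_gt0 // ler_pM2l // -lerBlDr.
Qed.

Section UniformSampling.
Set Implicit Arguments. Unset Strict Implicit.
Variables (m : nat) (k : 'I_m -> nat) (Mt : eqType) (R : realType).
Implicit Types (D : dataset k Mt) (s : seq (context k)).

Lemma exp_mech_ge0 (eps du : R) (u : dataset k Mt -> context k -> R) D s r :
  0 <= exp_mech eps du u D s r.
Proof. by rewrite divr_ge0 // sumr_ge0 // => c _; rewrite expR_ge0. Qed.

Lemma exp_mech_le (eps du : R) (u : dataset k Mt -> context k -> R) D1 D2 s r :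
  0 < eps -> 0 < du -> {in s, forall c, `|u D1 c - u D2 c| <= du} ->
  exp_mech eps du u D1 s r <= expR eps * exp_mech eps du u D2 s r.
Proof.
move=> eps_gt0 du_gt0 u_near.
have <- : expR (eps / 2) * expR (eps / 2) = expR eps.
  by rewrite -expRD -splitr.
apply: ler_sum_ratio => [c|c|c /u_near|c /u_near]; rewrite ?expR_ge0 //.
  by move=> /(le_trans (ler_norm _)); apply: expR_shift_le.
by rewrite distrC => /(le_trans (ler_norm _)); apply: expR_shift_le.
Qed.

Lemma draw_prob_ge0 : 0 <= draw_prob k R.
Proof. by rewrite exprn_ge0 // invr_ge0. Qed.

Variables (f : dataset k Mt -> record k Mt -> bool) (V : record k Mt).

Lemma accepted_COE D h : accepted f D V h = [seq C <- h | C \in COE f D V].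
Proof. by apply: eq_filter => C; rewrite inE andbC. Qed.

Lemma stops_at_COE D1 D2 : COE f D1 V = COE f D2 V ->
  forall n L (h : L.-tuple (context k)), stops_at f D1 V n h = stops_at f D2 V n h.
Proof. by move=> COE12 n L h; rewrite /stops_at !accepted_COE COE12. Qed.

Definition unif_sampling_term (eps du : R) (u : dataset k Mt -> context k -> R)
    n D r L : R :=
  \sum_(h : L.-tuple (context k) | stops_at f D V n h)
    draw_prob k R ^+ L * exp_mech eps du u D (accepted f D V h) r.

Lemma unif_sampling_term_ge0 (eps du : R) (u : dataset k Mt -> context k -> R)
    n D r L : 0 <= unif_sampling_term eps du u n D r L.
Proof.
by apply: sumr_ge0 => h _; rewrite mulr_ge0 ?exprn_ge0 ?exp_mech_ge0 ?draw_prob_ge0.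
Qed.

Lemma unif_sampling_prob_ge0 (eps du : R) (u : dataset k Mt -> context k -> R)
    n D r : (0 <= unif_sampling_prob eps du u f V n D r)%E.
Proof. by apply: nneseries_ge0 => L _ _; rewrite lee_fin unif_sampling_term_ge0. Qed.

Lemma unif_sampling_prob_le (eps du : R) (u : dataset k Mt -> context k -> R)
    n D1 D2 r :
  0 < eps -> 0 < du -> COE f D1 V = COE f D2 V ->
  {in COE f D1 V, forall C, `|u D1 C - u D2 C| <= du} ->
  (unif_sampling_prob eps du u f V n D1 r <=
   (expR eps)%:E * unif_sampling_prob eps du u f V n D2 r)%E.
Proof.
move=> eps_gt0 du_gt0 COE12 u_near.
have term_ge0 D L : (0 <= (unif_sampling_term eps du u n D r L)%:E)%E.
  by rewrite lee_fin unif_sampling_term_ge0.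
rewrite /unif_sampling_prob -nneseriesZl; last by move=> L _; exact: term_ge0.
apply: lee_nneseries => [L _ _|L _]; first exact: term_ge0.
rewrite lee_fin mulr_sumr; under eq_bigl do rewrite (stops_at_COE COE12).
apply: ler_sum => h _; rewrite [leRHS]mulrCA.
apply: ler_wpM2l; first by rewrite exprn_ge0 ?draw_prob_ge0.
have -> : accepted f D2 V h = accepted f D1 V h by rewrite !accepted_COE COE12.
apply: exp_mech_le => // C; rewrite accepted_COE mem_filter => /andP[+ _].
exact: u_near.
Qed.

End UniformSampling.

Theorem theorem4 (m : nat) (k : 'I_m -> nat) (Mt : eqType) (R : realType)
  (f : dataset k Mt -> record k Mt -> bool) (V : record k Mt)
  (u : dataset k Mt -> context k -> R) (du eps1 : R) (n : nat) :
  0 < eps1 -> 0 < du -> du <= 1 ->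
  (forall D1 D2 : dataset k Mt, neighbors D1 D2 ->
     forall C : context k, V \in restrictC D1 C -> V \in restrictC D2 C ->
       `|u D1 C - u D2 C| <= du) ->
  OCDP (2 * eps1) f V (unif_sampling_prob eps1 du u f V n).
Proof.
move=> eps1_gt0 du_gt0 _ u_sens D1 D2 [D12 [COE12 _]] S.
have u_near : {in COE f D1 V, forall C, `|u D1 C - u D2 C| <= du}.
  move=> C C1; have C2 : C \in COE f D2 V by rewrite -COE12.
  move: C1 C2; rewrite !inE => /andP[V1 _] /andP[V2 _].
  exact: u_sens D12 C V1 V2.
have exp_le : expR eps1 <= expR (2 * eps1) by rewrite ler_expR; lra.
rewrite ge0_sume_distrr => [|r _]; last exact: unif_sampling_prob_ge0.
apply: lee_sum => r _.
apply: le_trans (unif_sampling_prob_le n r eps1_gt0 du_gt0 COE12 u_near) _.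
by rewrite lee_wpmul2r ?unif_sampling_prob_ge0 ?lee_fin.
Qed.
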